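(* Assume (A1)–(A2) below. There exist constants $\hat c_0,\hat C_0>0$, depending only on the bounds on $\rho$ and $P''(\rho)$ (and on $\underline a,\bar a$) from (A1)–(A2), such that for every $\varepsilon\in[0,\bar\varepsilon]$ and all $\boldsymbol u=(\rho,w)$, $\hat{\boldsymbol u}=(\hat\rho,\hat w)\in L^2(0,\ell)^2$ with $\underline\rho\le\rho,\hat\rho\le\bar\rho$ and $-\bar w\le w,\hat w\le\bar w$ a.e., $$\hat c_0\|\boldsymbol u-\hat{\boldsymbol u}\|_{\varepsilon}^2\le\mathcal{H}_\varepsilon(\boldsymbol u|\hat{\boldsymbol u})\le\hat C_0\|\boldsymbol u-\hat{\boldsymbol u}\|_{\varepsilon}^2.$$
   Context: Fix $\ell>0$, $a:[0,\ell]\to\mathbb{R}$, a constant $g$, $z:[0,\ell]\to\mathbb{R}$ and a smooth strictly convex $P:(0,\infty)\to\mathbb{R}$. (A1): positive constants $\underline\rho\le\bar\rho$, $\bar w$, $\bar\varepsilon$ with $\rho P''(\rho)\ge4\bar\varepsilon^2\bar w^2$ for $\underline\rho\le\rho\le\bar\rho$; $0<\underline a\le a\le\bar a$; $|gz|\le\bar g\bar z$. (A2): $0\le\varepsilon\le\bar\varepsilon$ and states satisfy $\underline\rho\le\rho\le\bar\rho$, $-\bar w\le w\le\bar w$. The energy is $\mathcal{H}_\varepsilon(\rho,w)=\int_0^\ell a(\varepsilon^2\rho w^2/2+P(\rho)+gz\rho)\,dx$ and the relative energy is $\mathcal{H}_\varepsilon(\boldsymbol u|\hat{\boldsymbol u})=\mathcal{H}_\varepsilon(\boldsymbol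 u)-\mathcal{H}_\varepsilon(\hat{\boldsymbol u})-\int_0^\ell a\big[(\varepsilon^2\hat w^2/2+P'(\hat\rho)+gz)(\rho-\hat\rho)+\varepsilon^2\hat\rho\hat w(w-\hat w)\big]dx$. The weighted norm is $\|(\rho,w)\|_\varepsilon^2=\|\sqrt a\rho\|_{L^2(0,\ell)}^2+\|\varepsilon w\|_{L^2(0,\ell)}^2$. *)

From HB Require Import structures.
From mathcomp Require Import all_boot all_order all_algebra.
From mathcomp Require Import all_classical all_reals all_analysis.
Set Implicit Arguments. Unset Strict Implicit. Unset Printing Implicit Defensive.
Import Order.TTheory GRing.Theory Num.Theory.
Import numFieldNormedType.Exports.
Local Open Scope classical_set_scope.
Local Open Scope ring_scope.

Section Defs.
Variable R : realType.

Definition smooth_pos (P : R -> R) : Prop :=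
  forall (n : nat) (x : R), 0 < x -> derivable (derive1n n P) x 1.

Definition strictly_convex_pos (P : R -> R) : Prop :=
  forall x y t : R, 0 < x -> 0 < y -> x != y -> 0 < t < 1 ->
    P (t * x + (1 - t) * y) < t * P x + (1 - t) * P y.

(* the interval (0, l) as a set; endpoints are Lebesgue-null *)
Definition dom (l : R) : set R := `[0, l]%classic.

Definition energy (l : R) (a z : R -> R) (g : R) (P : R -> R) (eps : R)
    (rho w : R -> R) : R :=
  Rintegral lebesgue_measure (dom l)
    (fun x => a x * (eps ^+ 2 * rho x * w x ^+ 2 / 2 + P (rho x) + g * z x * rho x)).

Definition rel_energy (l : R) (a z : R -> R) (g : R) (P : R -> R) (eps : R)
    (rho w rhoh wh : R -> R) : R :=
  energy l a z g P eps rho w - energy l a z g P eps rhoh wh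
  - Rintegral lebesgue_measure (dom l)
      (fun x => a x * ((eps ^+ 2 * wh x ^+ 2 / 2 + (derive1 P) (rhoh x) + g * z x)
                         * (rho x - rhoh x)
                       + eps ^+ 2 * rhoh x * wh x * (w x - wh x))).

Definition eps_norm2 (l : R) (a : R -> R) (eps : R) (r v : R -> R) : R :=
  Rintegral lebesgue_measure (dom l) (fun x => a x * r x ^+ 2)
  + Rintegral lebesgue_measure (dom l) (fun x => (eps * v x) ^+ 2).

End Defs.

(* Up to the factor a(x), the integrand of H_eps(u | uh) is the second-order
   Taylor remainder at uh of the energy density e(r, v) = eps^2 r v^2 / 2 + P(r);
   the potential term g z r is linear and cancels.  Along the segment from uh to
   u, the second derivative of e in the direction (d, e) is
   P''(r) d^2 + eps^2 (2 v d e + r e^2).  Completing the square, the condition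
   4 eps^2 v^2 <= r P''(r) of (A1) bounds it below by (P''(r) d^2 + r (eps e)^2) / 2,
   and Young's inequality bounds it above; so the remainder is comparable to
   d^2 + (eps e)^2 with constants involving only the extrema of P'' on
   [rho_lo, rho_hi], rho_lo, rho_hi, a_lo and a_hi. *)

From HB Require Import structures.
From mathcomp Require Import all_boot all_order all_algebra.
From mathcomp Require Import all_classical all_reals all_analysis.
From mathcomp Require Import measurable_realfun lebesgue_integral.
From mathcomp Require Import ring lra.
Set Implicit Arguments. Unset Strict Implicit. Unset Printing Implicit Defensive.
Import Order.TTheory GRing.Theory Num.Theory.
Import numFieldNormedType.Exports.
Local Open Scope classical_set_scope.
Local Open Scope ring_scope.

Section Taylor.
Variable R : realType.
Implicit Types (f df : R -> R) (a b k : R).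

Lemma is_derive_ge0_ndecr f df a b :
  (forall x, a <= x <= b -> is_derive x 1 f (df x)) ->
  (forall x, a <= x <= b -> 0 <= df x) ->
  forall x y, a <= x -> x <= y -> y <= b -> f x <= f y.
Proof.
move=> fdf df0; apply: ger0_derive1_ndecr.
- by move=> x; rewrite in_itv => /andP[/ltW ax /ltW xb]; case: (fdf x _) => //; rewrite ax.
- move=> x; rewrite in_itv => /andP[/ltW ax /ltW xb].
  have xab : a <= x <= b by rewrite ax.
  have dfx := fdf x xab; rewrite derive1E derive_val; exact: df0.
- apply: derivable_within_continuous => x; rewrite in_itv => xab.
  by case: (fdf x xab).
Qed.

Lemma taylor2_ge (G G1 G2 : R -> R) k :
  (forall s : R, 0 <= s <= 1 -> is_derive s 1 G (G1 s)) ->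
  (forall s : R, 0 <= s <= 1 -> is_derive s 1 G1 (G2 s)) ->
  (forall s : R, 0 <= s <= 1 -> k <= G2 s) ->
  k / 2 <= G 1 - G 0 - G1 0.
Proof.
move=> dG dG1 kG2.
have G1_ge (s : R) : 0 <= s <= 1 -> G1 0 + k * s <= G1 s.
  case/andP=> s0 s1.
  suff : G1 0 - k * 0 <= G1 s - k * s by lra.
  apply: (@is_derive_ge0_ndecr (fun t => G1 t - k * t) (fun t => G2 t - k) 0 1) => //.
  - move=> t /dG1 dt; apply: is_derive_eq.
    by rewrite /GRing.scale /=; ring.
  - by move=> t /kG2; rewrite subr_ge0.
suff : G 0 - 0 * G1 0 - k / 2 * 0 ^+ 2 <= G 1 - 1 * G1 0 - k / 2 * 1 ^+ 2 by lra.
apply: (@is_derive_ge0_ndecr (fun t => G t - t * G1 0 - k / 2 * t ^+ 2)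
          (fun t => G1 t - G1 0 - k * t) 0 1) => //.
- move=> t /dG dt; apply: is_derive_eq.
  by rewrite /GRing.scale /=; field.
- by move=> t /G1_ge; lra.
Qed.

Lemma taylor2_le (G G1 G2 : R -> R) k :
  (forall s : R, 0 <= s <= 1 -> is_derive s 1 G (G1 s)) ->
  (forall s : R, 0 <= s <= 1 -> is_derive s 1 G1 (G2 s)) ->
  (forall s : R, 0 <= s <= 1 -> G2 s <= k) ->
  G 1 - G 0 - G1 0 <= k / 2.
Proof.
move=> dG dG1 G2k.
suff : - k / 2 <= - G 1 - - G 0 - - G1 0 by lra.
apply: (@taylor2_ge (fun t => - G t) (fun t => - G1 t) (fun t => - G2 t)).
- by move=> s /dG ds; exact: is_deriveN.
- by move=> s /dG1 ds; exact: is_deriveN.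
- by move=> s /G2k; rewrite lerN2.
Qed.

Lemma is_derive_along (f : R -> R) (x0 d t df : R) :
  is_derive (x0 + t * d) 1 f df -> is_derive t 1 (fun s => f (x0 + s * d)) (df * d).
Proof.
move=> fdf.
have line : is_derive t 1 (fun s : R => x0 + s * d) d.
  by apply: is_derive_eq; rewrite /GRing.scale /=; ring.
have [dline _] := line; have [df' _] := fdf.
apply: DeriveDef.
  by apply/derivable1_diffP; apply: differentiable_comp; exact/derivable1_diffP.
by rewrite -derive1E (derive1_comp dline) // !derive1E !derive_val.
Qed.

End Taylor.

Section HessianForm.
Variable R : realFieldType.

(* Second derivative of [(r, v) |-> P r + eps^2 r v^2 / 2] at [(q, u)] in the
   direction [(d, e)], where [p] stands for [P'' q]. *)
Definition hessian_form (p q u eps d e : R) :=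
  p * d ^+ 2 + eps ^+ 2 * (2 * d * e * u + q * e ^+ 2).

Lemma hessian_form_ge (lo m p q u eps d e : R) :
  0 < m -> m <= p -> lo <= q -> 4 * (eps * u) ^+ 2 <= q * p ->
  m / 2 * d ^+ 2 + lo / 2 * (eps * e) ^+ 2 <= hessian_form p q u eps d e.
Proof.
move=> m_gt0 p_ge q_ge cross_le.
have p_gt0 : 0 < p by lra.
pose F := p / 2 * d ^+ 2 + 2 * (eps * u) * d * (eps * e) + q / 2 * (eps * e) ^+ 2.
have F_ge0 : 0 <= F.
  have : 0 <= (p * d + 2 * (eps * u) * (eps * e)) ^+ 2
              + (q * p - 4 * (eps * u) ^+ 2) * (eps * e) ^+ 2.
    by rewrite addr_ge0 ?sqr_ge0 // mulr_ge0 ?sqr_ge0 ?subr_ge0.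
  have -> : (p * d + 2 * (eps * u) * (eps * e)) ^+ 2
              + (q * p - 4 * (eps * u) ^+ 2) * (eps * e) ^+ 2 = 2 * p * F.
    by rewrite /F; field.
  by rewrite pmulr_rge0 // mulr_gt0.
have -> : hessian_form p q u eps d e = F + (p / 2 * d ^+ 2 + q / 2 * (eps * e) ^+ 2).
  by rewrite /hessian_form /F; field.
have := sqr_ge0 d; have := sqr_ge0 (eps * e); nra.
Qed.

Lemma hessian_form_le (lo hi M p q u eps d e : R) :
  0 < lo -> p <= M -> lo <= q <= hi -> 4 * (eps * u) ^+ 2 <= q * p ->
  hessian_form p q u eps d e <= (M + hi * M / 4) * d ^+ 2 + (1 + hi) * (eps * e) ^+ 2.
Proof.
move=> lo_gt0 p_le /andP[q_ge q_le] cross_le.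
have p_ge0 : 0 <= p.
  have q_gt0 : 0 < q by lra.
  rewrite -(pmulr_rge0 _ q_gt0); apply: le_trans cross_le.
  by rewrite mulr_ge0 ?sqr_ge0.
have cross_le' : (eps * u) ^+ 2 <= hi * M / 4.
  have : q * p <= hi * M by apply: ler_pM; lra.
  lra.
have young : 2 * (eps * u) * d * (eps * e) <= (eps * u) ^+ 2 * d ^+ 2 + (eps * e) ^+ 2.
  have := sqr_ge0 ((eps * u) * d - eps * e); lra.
have -> : hessian_form p q u eps d e
          = p * d ^+ 2 + 2 * (eps * u) * d * (eps * e) + q * (eps * e) ^+ 2.
  by rewrite /hessian_form; ring.
have := sqr_ge0 d; have := sqr_ge0 (eps * e); nra.
Qed.

End HessianForm.

Lemma weighted_bounds (R : realFieldType) (A B dd ee a_lo a_hi al be ga de : R) :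
  0 < a_lo -> a_lo <= A <= a_hi -> 0 <= al -> 0 <= be -> 0 <= de ->
  0 <= dd -> 0 <= ee ->
  al * dd + be * ee <= B <= ga * dd + de * ee ->
  Num.min al (a_lo * be) * (A * dd + ee) <= A * B <= Num.max ga (a_hi * de) * (A * dd + ee).
Proof.
move=> a_lo_gt0 /andP[A_ge A_le] al0 be0 de0 dd0 ee0 /andP[B_ge B_le].
set c := Num.min _ _; set C := Num.max _ _.
have c_al : c <= al by rewrite ge_min lexx.
have c_be : c <= a_lo * be by rewrite ge_min lexx orbT.
have C_ga : ga <= C by rewrite le_max lexx.
have C_de : a_hi * de <= C by rewrite le_max lexx orbT.
have A_gt0 : 0 < A by lra.
have Add0 : 0 <= A * dd by rewrite mulr_ge0 // ltW.
apply/andP; split.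
- have : A * (al * dd + be * ee) <= A * B by rewrite ler_pM2l.
  have : c * ee <= A * be * ee by apply: ler_wpM2r => //; nra.
  have : c * (A * dd) <= al * (A * dd) by exact: ler_wpM2r.
  nra.
- have : A * B <= A * (ga * dd + de * ee) by rewrite ler_pM2l.
  have : A * de * ee <= C * ee by apply: ler_wpM2r => //; nra.
  have : ga * (A * dd) <= C * (A * dd) by exact: ler_wpM2r.
  nra.
Qed.

Definition rel_energy_lower_const (R : realFieldType) (m lo a_lo : R) :=
  Num.min (m / 4) (a_lo * (lo / 4)).

Definition rel_energy_upper_const (R : realFieldType) (M hi a_hi : R) :=
  Num.max ((M + hi * M / 4) / 2) (a_hi * ((1 + hi) / 2)).

Lemma rel_energy_lower_const_gt0 (R : realFieldType) (m lo a_lo : R) :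
  0 < m -> 0 < lo -> 0 < a_lo -> 0 < rel_energy_lower_const m lo a_lo.
Proof. by move=> *; rewrite lt_min !mulr_gt0 ?invr_gt0. Qed.

Lemma rel_energy_upper_const_gt0 (R : realFieldType) (M hi a_hi : R) :
  0 <= hi -> 0 < a_hi -> 0 < rel_energy_upper_const M hi a_hi.
Proof.
move=> hi_ge0 a_hi_gt0; rewrite lt_max; apply/orP; right.
by rewrite !mulr_gt0 ?invr_gt0 ?ltr_wpDr.
Qed.

Lemma segment_in (R : realFieldType) (a b x y t : R) :
  a <= x <= b -> a <= y <= b -> 0 <= t <= 1 -> a <= y + t * (x - y) <= b.
Proof.
move=> /andP[ax xb] /andP[ay yb] /andP[t0 t1].
have -> : y + t * (x - y) = (1 - t) * y + t * x by ring.
apply/andP; split; nra.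
Qed.

Section RelativeDensity.
Variable R : realType.
Variables P P1 P2 : R -> R.
Hypothesis P_P1 : forall x : R, 0 < x -> is_derive x 1 P (P1 x).
Hypothesis P1_P2 : forall x : R, 0 < x -> is_derive x 1 P1 (P2 x).

Definition rel_density (eps r v rh vh : R) :=
  P r - P rh - P1 rh * (r - rh)
  + eps ^+ 2 * (r * (v - vh) ^+ 2 / 2 + vh * (r - rh) * (v - vh)).

Lemma rel_density_taylor (lo hi eps r v rh vh : R) :
  0 < lo -> lo <= r <= hi -> lo <= rh <= hi ->
  exists G G1 : R -> R,
  [/\ forall t : R, 0 <= t <= 1 -> is_derive t 1 G (G1 t),
      forall t : R, 0 <= t <= 1 -> is_derive t 1 G1
        (hessian_form (P2 (rh + t * (r - rh))) (rh + t * (r - rh)) (vh + t * (v - vh))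
           eps (r - rh) (v - vh))
    & rel_density eps r v rh vh = G 1 - G 0 - G1 0].
Proof.
move=> lo_gt0 r_in rh_in; set d := r - rh; set e := v - vh.
have pos (t : R) : 0 <= t <= 1 -> 0 < rh + t * d.
  by move=> /(segment_in r_in rh_in) /andP[+ _]; exact: lt_le_trans.
pose K (t : R) := eps ^+ 2 / 2 * ((rh + t * d) * ((vh + t * e) * (vh + t * e))).
pose K1 (t : R) :=
  eps ^+ 2 / 2 * (d * ((vh + t * e) * (vh + t * e)) + 2 * (rh + t * d) * (vh + t * e) * e).
exists (fun t => P (rh + t * d) + K t), (fun t => P1 (rh + t * d) * d + K1 t); split.
- move=> t /pos /P_P1 /is_derive_along dP.
  rewrite [X in is_derive _ _ X _](_ : _ = (fun t => P (rh + t * d)) + K) //.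
  by apply: is_derive_eq; rewrite /K1 /GRing.scale /=; ring.
- move=> t /pos /P1_P2 /is_derive_along dP1.
  rewrite [X in is_derive _ _ X _](_ : _ = (fun t => P1 (rh + t * d) * d) + K1) //.
  by apply: is_derive_eq; rewrite /hessian_form /GRing.scale /=; field.
- by rewrite /rel_density /K /K1 /d /e !mul0r !mul1r !addr0 subrKC; field.
Qed.

Variables (lo hi wb m M eps : R).
Hypotheses (lo_gt0 : 0 < lo) (m_gt0 : 0 < m).
Hypothesis P2_in : forall x : R, lo <= x <= hi -> m <= P2 x <= M.
Hypothesis cross_le :
  forall x u : R, lo <= x <= hi -> - wb <= u <= wb -> 4 * (eps * u) ^+ 2 <= x * P2 x.
Variables (r v rh vh : R).
Hypotheses (r_in : lo <= r <= hi) (rh_in : lo <= rh <= hi).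
Hypotheses (v_in : - wb <= v <= wb) (vh_in : - wb <= vh <= wb).

Lemma rel_density_ge :
  m / 4 * (r - rh) ^+ 2 + lo / 4 * (eps * (v - vh)) ^+ 2 <= rel_density eps r v rh vh.
Proof.
have [G [G1 [dG dG1 ->]]] := rel_density_taylor eps v vh lo_gt0 r_in rh_in.
have -> : m / 4 * (r - rh) ^+ 2 + lo / 4 * (eps * (v - vh)) ^+ 2
          = (m / 2 * (r - rh) ^+ 2 + lo / 2 * (eps * (v - vh)) ^+ 2) / 2 by field.
apply: taylor2_ge dG dG1 _ => t t_in.
have x_in := segment_in r_in rh_in t_in; have /andP[P2_ge _] := P2_in x_in.
apply: hessian_form_ge => //; first by case/andP: x_in.
exact: cross_le x_in (segment_in v_in vh_in t_in).
Qed.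

Lemma rel_density_le :
  rel_density eps r v rh vh
  <= (M + hi * M / 4) / 2 * (r - rh) ^+ 2 + (1 + hi) / 2 * (eps * (v - vh)) ^+ 2.
Proof.
have [G [G1 [dG dG1 ->]]] := rel_density_taylor eps v vh lo_gt0 r_in rh_in.
have -> : (M + hi * M / 4) / 2 * (r - rh) ^+ 2 + (1 + hi) / 2 * (eps * (v - vh)) ^+ 2
          = ((M + hi * M / 4) * (r - rh) ^+ 2 + (1 + hi) * (eps * (v - vh)) ^+ 2) / 2 by field.
apply: taylor2_le dG dG1 _ => t t_in.
have x_in := segment_in r_in rh_in t_in; have /andP[_ P2_le] := P2_in x_in.
exact: hessian_form_le lo_gt0 P2_le x_in (cross_le x_in (segment_in v_in vh_in t_in)).
Qed.

Lemma rel_density_weighted_bounds (A a_lo a_hi : R) :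
  0 < a_lo -> a_lo <= A <= a_hi ->
  rel_energy_lower_const m lo a_lo * (A * (r - rh) ^+ 2 + (eps * (v - vh)) ^+ 2)
    <= A * rel_density eps r v rh vh
    <= rel_energy_upper_const M hi a_hi * (A * (r - rh) ^+ 2 + (eps * (v - vh)) ^+ 2).
Proof.
move=> a_lo_gt0 A_in.
have hi_gt0 : 0 < hi.
  by case/andP: r_in => lo_r r_hi; exact: lt_le_trans lo_gt0 (le_trans lo_r r_hi).
apply: weighted_bounds A_in _ _ _ (sqr_ge0 _) (sqr_ge0 _) _ => //.
- by rewrite divr_ge0 // ltW.
- by rewrite divr_ge0 // ltW.
- by rewrite divr_ge0 // addr_ge0 // ltW.
- by rewrite rel_density_ge rel_density_le.
Qed.

End RelativeDensity.

Section IntegralOffNull.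
Context d (T : measurableType d) (R : realType) (mu : {measure set T -> \bar R}).
Variables (D N : set T).
Hypotheses (mD : measurable D) (mN : measurable N) (N0 : (mu N = 0)%E).
Local Open Scope ereal_scope.

Lemma ge0_le_integral_nonmeas (f g : T -> \bar R) :
  (forall x, D x -> 0 <= f x) -> (forall x, D x -> f x <= g x) ->
  \int[mu]_(x in D) f x <= \int[mu]_(x in D) g x.
Proof.
move=> f0 fg.
have g0 x : D x -> 0 <= g x by move=> Dx; exact: le_trans (f0 x Dx) (fg x Dx).
rewrite !ge0_integralE //; apply: ereal_sup_le => _ [h /= hf <-].
exists h => //= x; apply: le_trans (hf x) _.
by rewrite !patchE; case: ifPn => // /set_mem; exact: fg.
Qed.

Lemma ae_eq_off_null (f g : T -> \bar R) :
  (forall x, D x -> ~ N x -> f x = g x) -> ae_eq mu D f g.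
Proof.
move=> fg; exists N; split => // x /= fgx; apply: contrapT => Nx.
by apply: fgx => Dx; exact: fg.
Qed.

(* [f] need not be measurable: it is squeezed between two measurable
   modifications of [g] on the null set [N]. *)
Lemma ge0_integral_eq_off_null (f g : T -> \bar R) :
  (forall x, D x -> 0 <= f x) -> (forall x, D x -> 0 <= g x) -> measurable_fun D g ->
  (forall x, D x -> ~ N x -> f x = g x) ->
  \int[mu]_(x in D) f x = \int[mu]_(x in D) g x.
Proof.
move=> f0 g0 mg fg.
pose g_lo := g \_ (~` N); pose g_hi := g_lo \+ (cst +oo) \_ N.
have mg_lo : measurable_fun D g_lo.
  apply/(measurable_restrict _ (measurableC mN) mD).
  exact: measurable_funS mD (@subIsetl _ D (~` N)) mg.
have mg_hi : measurable_fun D g_hi.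
  by apply: emeasurable_funD => //; apply/(measurable_restrict _ mN mD); exact: measurable_cst.
have g_lo0 x : D x -> 0 <= g_lo x by move=> Dx; rewrite /g_lo patchE; case: ifPn => // _; exact: g0.
have g_hi0 x : D x -> 0 <= g_hi x.
  move=> Dx; rewrite /g_hi /= [X in _ + X]patchE adde_ge0 ?g_lo0 //.
  by case: ifPn => // _; rewrite leey.
have off_N x : ~ N x -> (x \in ~` N) /\ (x \in N) = false.
  by move=> Nx; split; [exact/mem_set | apply/negbTE/negP => /set_mem].
have on_N x : N x -> (x \in ~` N) = false /\ (x \in N).
  by move=> Nx; split; [apply/negbTE/negP => /set_mem | exact/mem_set].
apply/eqP; rewrite eq_le; apply/andP; split.
- rewrite (@ge0_ae_eq_integral _ _ _ _ _ g g_hi) //; last first.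
    apply: ae_eq_off_null => x Dx /off_N[xNc xN].
    by rewrite /g_hi /g_lo /= !patchE xNc xN adde0.
  apply: ge0_le_integral_nonmeas => // x Dx; rewrite /g_hi /g_lo /= !patchE.
  have [/on_N[-> ->]|Nx] := pselect (N x); first by rewrite add0e leey.
  by have [-> ->] := off_N x Nx; rewrite adde0 fg.
- rewrite (@ge0_ae_eq_integral _ _ _ _ _ g g_lo) //; last first.
    by apply: ae_eq_off_null => x Dx /off_N[xNc _]; rewrite /g_lo patchE xNc.
  apply: ge0_le_integral_nonmeas => // x Dx; rewrite /g_lo patchE.
  have [/on_N[-> _]|Nx] := pselect (N x); first exact: f0.
  by have [-> _] := off_N x Nx; rewrite fg.
Qed.

Lemma integral_eq_off_null (f g : T -> \bar R) :
  measurable_fun D g -> (forall x, D x -> ~ N x -> f x = g x) ->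
  \int[mu]_(x in D) f x = \int[mu]_(x in D) g x.
Proof.
move=> mg fg; rewrite integralE [RHS]integralE; congr (_ - _).
- apply: ge0_integral_eq_off_null; [by move=> *; exact: funepos_ge0 ..
  | exact: measurable_funepos | by move=> x Dx Nx; rewrite !funeposE fg].
- apply: ge0_integral_eq_off_null; [by move=> *; exact: funeneg_ge0 ..
  | exact: measurable_funeneg | by move=> x Dx Nx; rewrite !funenegE fg].
Qed.

Local Close Scope ereal_scope.

Lemma Rintegral_eq_off_null (f g : T -> R) :
  measurable_fun D g -> (forall x, D x -> ~ N x -> f x = g x) ->
  Rintegral mu D f = Rintegral mu D g.
Proof.
move=> mg fg; congr fine; apply: integral_eq_off_null; first exact/measurable_EFinP.
by move=> x Dx Nx /=; rewrite fg.
Qed.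

End IntegralOffNull.

Section BoundedMeasurable.
Context d (T : measurableType d) (R : realType).
Variable D : set T.

Definition bounded_measurable (f : T -> R) :=
  measurable_fun D f /\ exists C, forall x, D x -> `|f x| <= C.

Lemma bounded_measurable_cst (c : R) : bounded_measurable (fun=> c).
Proof. by split; [exact: measurable_cst | exists `|c|]. Qed.

Lemma bounded_measurable_itv (f : T -> R) (lo hi : R) :
  measurable_fun D f -> (forall x, D x -> lo <= f x <= hi) -> bounded_measurable f.
Proof.
move=> mf f_in; split => //; exists (`|lo| + `|hi|) => x /f_in /andP[lo_f f_hi].
rewrite ler_norml; apply/andP; split.
- have := ler_norm (- lo); rewrite normrN; have := normr_ge0 hi; lra.
- have := ler_norm hi; have := normr_ge0 lo; lra.
Qed.

Lemma bounded_measurableD (f g : T -> R) :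
  bounded_measurable f -> bounded_measurable g -> bounded_measurable (fun x => f x + g x).
Proof.
move=> [mf [Cf hf]] [mg [Cg hg]]; split; first exact: measurable_funD.
exists (Cf + Cg) => x Dx; apply: le_trans (ler_normD _ _) _.
by apply: lerD; [exact: hf | exact: hg].
Qed.

Lemma bounded_measurableN (f : T -> R) :
  bounded_measurable f -> bounded_measurable (fun x => - f x).
Proof.
move=> [mf [C hC]]; split; first exact: measurableT_comp.
by exists C => x Dx; rewrite normrN; exact: hC.
Qed.

Lemma bounded_measurableM (f g : T -> R) :
  bounded_measurable f -> bounded_measurable g -> bounded_measurable (fun x => f x * g x).
Proof.
move=> [mf [Cf hf]] [mg [Cg hg]]; split; first exact: measurable_funM.
exists (Cf * Cg) => x Dx; rewrite normrM.
by apply: ler_pM => //; [exact: hf | exact: hg].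
Qed.

Lemma bounded_measurableX (f : T -> R) n :
  bounded_measurable f -> bounded_measurable (fun x => f x ^+ n).
Proof.
move=> bf; elim: n => [|n IHn]; first exact: bounded_measurable_cst.
under eq_fun do rewrite exprS; exact: bounded_measurableM.
Qed.

Lemma bounded_measurable_integrable (mu : {measure set T -> \bar R}) (f : T -> R) :
  measurable D -> (mu D < +oo)%E -> bounded_measurable f -> mu.-integrable D (EFin \o f).
Proof.
move=> mD muD [mf [C hC]]; apply: measurable_bounded_integrable => //.
exists C; split; first exact: num_real.
by move=> M CM x Dx /=; apply: le_trans (hC x Dx) _; exact: ltW.
Qed.

End BoundedMeasurable.

Ltac bounded_measurable_ring :=
  repeat first [ assumption | apply: bounded_measurable_cst | apply: bounded_measurableD
               | apply: bounded_measurableN | apply: bounded_measurableM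
               | apply: bounded_measurableX ].

Section Clamp.
Variable R : realType.

Definition clamp (lo hi x : R) := Num.max lo (Num.min x hi).

Lemma clamp_in (lo hi x : R) : lo <= hi -> lo <= clamp lo hi x <= hi.
Proof. by move=> lo_hi; rewrite le_max lexx ge_max lo_hi ge_min lexx orbT. Qed.

Lemma clamp_id (lo hi x : R) : lo <= x <= hi -> clamp lo hi x = x.
Proof. by case/andP=> lo_x x_hi; rewrite /clamp (min_l x_hi) (max_r lo_x). Qed.

Lemma measurable_clamp d (T : measurableType d) (D : set T) (lo hi : R) (f : T -> R) :
  measurable_fun D f -> measurable_fun D (fun x => clamp lo hi (f x)).
Proof.
move=> mf; apply: (measurable_maxr (f := fun=> lo)); first exact: measurable_cst.
by apply: (measurable_minr (g := fun=> hi)) => //; exact: measurable_cst.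
Qed.

End Clamp.

Lemma bounded_measurable_comp d (T : measurableType d) (R : realType) (D : set T)
    (F : R -> R) (f : T -> R) (lo hi : R) :
  lo <= hi -> {within `[lo, hi], continuous F} ->
  measurable_fun D f -> (forall x, D x -> lo <= f x <= hi) ->
  bounded_measurable D (fun x => F (f x)).
Proof.
move=> lo_hi cF mf f_in; split.
  apply: (measurable_comp (F := `[lo, hi]%classic)) => //.
  - by move=> _ [x Dx <-]; rewrite /= in_itv f_in.
  - exact: subspace_continuous_measurable_fun.
have [c1 _ F_le] := EVT_max lo_hi cF; have [c2 _ F_ge] := EVT_min lo_hi cF.
exists (`|F c1| + `|F c2|) => x /f_in fx_in; rewrite ler_norml.
have := F_le (f x) fx_in; have := F_ge (f x) fx_in.
have := ler_norm (F c1); have := ler_norm (- F c2); rewrite normrN.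
have := normr_ge0 (F c1); have := normr_ge0 (F c2); lra.
Qed.

Lemma lebesgue_measure_dom_lty (R : realType) (l : R) : (lebesgue_measure (dom l) < +oo)%E.
Proof. by rewrite /dom lebesgue_measure_itv; case: ifPn => _; rewrite ?ltry. Qed.

Section RelativeEnergy.
Variables (R : realType) (P : R -> R) (lo hi wb l g eps : R) (a z : R -> R).
Hypotheses (lo_hi : lo <= hi) (wb_ge0 : 0 <= wb).
Hypothesis P_cont : {within `[lo, hi], continuous P}.
Hypothesis P1_cont : {within `[lo, hi], continuous (derive1 P)}.
Hypotheses (a_bm : bounded_measurable (dom l) a)
           (gz_bm : bounded_measurable (dom l) (fun x => g * z x)).

Let mdom : measurable (dom l) := measurable_itv _.

Let bm_integrable (f : R -> R) :
  bounded_measurable (dom l) f -> lebesgue_measure.-integrable (dom l) (EFin \o f) :=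
  @bounded_measurable_integrable _ _ _ _ lebesgue_measure f mdom (lebesgue_measure_dom_lty l).

Let in_ranges (r v rh vh : R) :=
  [/\ lo <= r <= hi, lo <= rh <= hi, - wb <= v <= wb & - wb <= vh <= wb].

Let dist2 (x r v rh vh : R) := a x * (r - rh) ^+ 2 + (eps * (v - vh)) ^+ 2.

Section InRangeStates.
Variables rho w rhoh wh : R -> R.
Hypotheses (m_rho : measurable_fun (dom l) rho) (m_rhoh : measurable_fun (dom l) rhoh).
Hypotheses (rho_in : forall x, dom l x -> lo <= rho x <= hi)
           (rhoh_in : forall x, dom l x -> lo <= rhoh x <= hi).
Hypotheses (w_bm : bounded_measurable (dom l) w) (wh_bm : bounded_measurable (dom l) wh).

Let rho_bm := bounded_measurable_itv m_rho rho_in.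
Let rhoh_bm := bounded_measurable_itv m_rhoh rhoh_in.
Let P_rho_bm := bounded_measurable_comp lo_hi P_cont m_rho rho_in.
Let P_rhoh_bm := bounded_measurable_comp lo_hi P_cont m_rhoh rhoh_in.
Let P1_rhoh_bm := bounded_measurable_comp lo_hi P1_cont m_rhoh rhoh_in.

Lemma rel_energy_Rintegral :
  rel_energy l a z g P eps rho w rhoh wh =
  Rintegral lebesgue_measure (dom l)
    (fun x => a x * rel_density P (derive1 P) eps (rho x) (w x) (rhoh x) (wh x)).
Proof.
rewrite /rel_energy /energy -!RintegralB //; do ?[apply: bm_integrable; bounded_measurable_ring].
by apply: eq_Rintegral => x _; rewrite /rel_density; field.
Qed.

Lemma eps_norm2_Rintegral :
  eps_norm2 l a eps (fun x => rho x - rhoh x) (fun x => w x - wh x) =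
  Rintegral lebesgue_measure (dom l) (fun x => dist2 x (rho x) (w x) (rhoh x) (wh x)).
Proof.
by rewrite /eps_norm2 -RintegralD //; apply: bm_integrable; bounded_measurable_ring.
Qed.

Lemma rel_energy_bounds_everywhere (c C : R) :
  (forall x, dom l x ->
     c * dist2 x (rho x) (w x) (rhoh x) (wh x)
       <= a x * rel_density P (derive1 P) eps (rho x) (w x) (rhoh x) (wh x)
       <= C * dist2 x (rho x) (w x) (rhoh x) (wh x)) ->
  c * eps_norm2 l a eps (fun x => rho x - rhoh x) (fun x => w x - wh x)
    <= rel_energy l a z g P eps rho w rhoh wh
  /\ rel_energy l a z g P eps rho w rhoh wh
    <= C * eps_norm2 l a eps (fun x => rho x - rhoh x) (fun x => w x - wh x).
Proof.
move=> bounds; rewrite rel_energy_Rintegral eps_norm2_Rintegral.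
rewrite -!RintegralZl //; do ?[apply: bm_integrable; bounded_measurable_ring].
by split; apply: le_Rintegral => //; do ?[apply: bm_integrable; bounded_measurable_ring];
  move=> x /bounds /andP[].
Qed.

Lemma rel_energy_eq_off_null (N : set R) (rho' w' rhoh' wh' : R -> R) :
  measurable N -> (lebesgue_measure N = 0)%E ->
  (forall x, dom l x -> ~ N x ->
     [/\ rho' x = rho x, w' x = w x, rhoh' x = rhoh x & wh' x = wh x]) ->
  rel_energy l a z g P eps rho' w' rhoh' wh' = rel_energy l a z g P eps rho w rhoh wh
  /\ eps_norm2 l a eps (fun x => rho' x - rhoh' x) (fun x => w' x - wh' x)
     = eps_norm2 l a eps (fun x => rho x - rhoh x) (fun x => w x - wh x).
Proof.
move=> mN N0 agree.
have off_null (f f' : R -> R) : bounded_measurable (dom l) f' ->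
    (forall x, dom l x -> ~ N x -> f x = f' x) ->
    Rintegral lebesgue_measure (dom l) f = Rintegral lebesgue_measure (dom l) f'.
  by move=> [mf' _]; exact: (@Rintegral_eq_off_null _ _ _ lebesgue_measure _ _ mdom mN N0 f f' mf').
rewrite /rel_energy /energy /eps_norm2; split; [congr (_ - _ - _) | congr (_ + _)].
all: apply: off_null; first by bounded_measurable_ring.
all: by move=> x Dx /(agree x Dx)[e1 e2 e3 e4]; rewrite ?e1 ?e2 ?e3 ?e4.
Qed.

End InRangeStates.

(* The states are clamped into the admissible ranges; this changes them
   only on a null set, where the integrands need not even be measurable. *)
Lemma rel_energy_bounds_ae (c C : R) (rho w rhoh wh : R -> R) :
  measurable_fun (dom l) rho -> measurable_fun (dom l) w ->
  measurable_fun (dom l) rhoh -> measurable_fun (dom l) wh ->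
  {ae lebesgue_measure, forall x, dom l x -> in_ranges (rho x) (w x) (rhoh x) (wh x)} ->
  (forall x r v rh vh, dom l x -> in_ranges r v rh vh ->
     c * dist2 x r v rh vh <= a x * rel_density P (derive1 P) eps r v rh vh
       <= C * dist2 x r v rh vh) ->
  c * eps_norm2 l a eps (fun x => rho x - rhoh x) (fun x => w x - wh x)
    <= rel_energy l a z g P eps rho w rhoh wh
  /\ rel_energy l a z g P eps rho w rhoh wh
    <= C * eps_norm2 l a eps (fun x => rho x - rhoh x) (fun x => w x - wh x).
Proof.
move=> m_rho m_w m_rhoh m_wh [N [mN N0 ranges_off_N]] bounds.
have wb_wb : - wb <= wb by rewrite -subr_ge0 opprK; exact: addr_ge0.
pose cr x := clamp lo hi (rho x); pose crh x := clamp lo hi (rhoh x).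
pose cw x := clamp (- wb) wb (w x); pose cwh x := clamp (- wb) wb (wh x).
have c_in x : in_ranges (cr x) (cw x) (crh x) (cwh x) by split; exact: clamp_in.
have agree x : dom l x -> ~ N x -> [/\ rho x = cr x, w x = cw x, rhoh x = crh x & wh x = cwh x].
  move=> Dx Nx; have [r_in rh_in v_in vh_in] : in_ranges (rho x) (w x) (rhoh x) (wh x).
    by apply: contrapT => out; apply/Nx/ranges_off_N => /(_ Dx).
  by rewrite /cr /cw /crh /cwh !clamp_id.
have cr_m := measurable_clamp lo hi m_rho; have crh_m := measurable_clamp lo hi m_rhoh.
have cw_bm : bounded_measurable (dom l) cw.
  by apply: bounded_measurable_itv (measurable_clamp _ _ m_w) _ => x _; exact: clamp_in.
have cwh_bm : bounded_measurable (dom l) cwh.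
  by apply: bounded_measurable_itv (measurable_clamp _ _ m_wh) _ => x _; exact: clamp_in.
have cr_in x : dom l x -> lo <= cr x <= hi by move=> _; exact: clamp_in.
have crh_in x : dom l x -> lo <= crh x <= hi by move=> _; exact: clamp_in.
have [-> ->] := rel_energy_eq_off_null cr_m crh_m cr_in crh_in cw_bm cwh_bm mN N0 agree.
apply: rel_energy_bounds_everywhere => // x Dx; exact: bounds Dx (c_in x).
Qed.

End RelativeEnergy.

Section SmoothPos.
Variable R : realType.

Lemma smooth_pos_is_derive (P : R -> R) (n : nat) (x : R) :
  smooth_pos P -> 0 < x -> is_derive x 1 (derive1n n P) (derive1n n.+1 P x).
Proof.
move=> sP x_gt0; have dP := sP n x x_gt0.
by apply: is_derive_eq (derivableP dP) _; rewrite derive1nS derive1E.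
Qed.

Lemma smooth_pos_continuous (P : R -> R) (n : nat) (lo hi : R) :
  smooth_pos P -> 0 < lo -> {within `[lo, hi], continuous (derive1n n P)}.
Proof.
move=> sP lo_gt0; apply: derivable_within_continuous => x.
by rewrite in_itv => /andP[lo_x _]; apply: sP; exact: lt_le_trans lo_x.
Qed.

Lemma smooth_pos_derive12 (P : R -> R) : smooth_pos P ->
  (forall x : R, 0 < x -> is_derive x 1 P (derive1 P x))
  /\ (forall x : R, 0 < x -> is_derive x 1 (derive1 P) (derive1n 2 P x)).
Proof.
move=> sP; split => x.
- by move=> /(smooth_pos_is_derive 0 sP); rewrite derive1n0 derive1n1.
- by move=> /(smooth_pos_is_derive 1 sP); rewrite derive1n1.
Qed.

End SmoothPos.

Lemma sqr_mul_le (R : realDomainType) (eps epsbar u wbar : R) :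
  0 <= eps <= epsbar -> - wbar <= u <= wbar -> (eps * u) ^+ 2 <= epsbar ^+ 2 * wbar ^+ 2.
Proof.
move=> /andP[eps_ge0 eps_le] /andP[u_ge u_le].
have eps2 : eps ^+ 2 <= epsbar ^+ 2 by rewrite !expr2; nra.
have u2 : u ^+ 2 <= wbar ^+ 2 by rewrite !expr2; nra.
by rewrite exprMn ler_pM ?sqr_ge0.
Qed.

Lemma itv_continuous_pos_lbound (R : realType) (f : R -> R) (a b : R) :
  a <= b -> {within `[a, b], continuous f} ->
  exists2 m, 0 < m & ((forall x, a <= x <= b -> 0 < f x) -> forall x, a <= x <= b -> m <= f x).
Proof.
move=> ab cf; have [c c_in f_ge] := EVT_min ab cf.
have [fc_gt0|fc_le0] := ltP 0 (f c).
  by exists (f c) => // _ x x_in; apply: f_ge; rewrite in_itv.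
exists 1 => // f_gt0; have := f_gt0 c c_in; lra.
Qed.

Lemma smooth_pos_derive2_bounds (R : realType) (P : R -> R) (lo hi : R) :
  smooth_pos P -> 0 < lo -> lo <= hi ->
  exists m M : R, 0 < m /\ forall c, 0 < c ->
    (forall r, lo <= r <= hi -> c <= r * derive1n 2 P r) ->
    forall x, lo <= x <= hi -> m <= derive1n 2 P x <= M.
Proof.
move=> sP lo_gt0 lo_hi.
have P2_cont := smooth_pos_continuous (n := 2) (hi := hi) sP lo_gt0.
have [cM _ P2_le] := EVT_max lo_hi P2_cont.
have [m m_gt0 P2_ge] := itv_continuous_pos_lbound lo_hi P2_cont.
exists m, (derive1n 2 P cM); split => // c c_gt0 c_le x x_in.
rewrite P2_le ?andbT ?in_itv //; apply: P2_ge x_in => y y_in.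
have y_gt0 : 0 < y by case/andP: y_in => lo_y _; exact: lt_le_trans lo_y.
by rewrite -(pmulr_rgt0 _ y_gt0); exact: lt_le_trans c_gt0 (c_le y y_in).
Qed.

Theorem lemma4p1 (R : realType) (P : R -> R) (rho_lo rho_hi a_lo a_hi : R) :
  smooth_pos P -> strictly_convex_pos P ->
  0 < rho_lo -> rho_lo <= rho_hi -> 0 < a_lo -> a_lo <= a_hi ->
  exists c0 C0 : R, 0 < c0 /\ 0 < C0 /\
  forall (wbar epsbar gbar zbar l g : R) (a z : R -> R),
    0 < wbar -> 0 < epsbar -> 0 < gbar -> 0 < zbar -> 0 < l ->
    (forall r, rho_lo <= r <= rho_hi ->
       4 * epsbar ^+ 2 * wbar ^+ 2 <= r * derive1n 2 P r) ->
    measurable_fun (dom l) a -> measurable_fun (dom l) z ->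
    (forall x, dom l x -> a_lo <= a x <= a_hi) ->
    (forall x, dom l x -> `|g * z x| <= gbar * zbar) ->
    forall eps : R, 0 <= eps <= epsbar ->
    forall rho w rhoh wh : R -> R,
      measurable_fun (dom l) rho -> measurable_fun (dom l) w ->
      measurable_fun (dom l) rhoh -> measurable_fun (dom l) wh ->
      {ae lebesgue_measure, forall x, dom l x ->
         [/\ rho_lo <= rho x <= rho_hi, rho_lo <= rhoh x <= rho_hi,
             - wbar <= w x <= wbar & - wbar <= wh x <= wbar]} ->
      c0 * eps_norm2 l a eps (fun x => rho x - rhoh x) (fun x => w x - wh x)
        <= rel_energy l a z g P eps rho w rhoh wh
      /\ rel_energy l a z g P eps rho w rhoh wh
        <= C0 * eps_norm2 l a eps (fun x => rho x - rhoh x) (fun x => w x - wh x).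
Proof.
move=> smooth _ lo_gt0 lo_hi a_lo_gt0 a_lo_hi.
have [m [M [m_gt0 P2_bounds]]] := smooth_pos_derive2_bounds smooth lo_gt0 lo_hi.
have [hi_gt0 a_hi_gt0] : 0 < rho_hi /\ 0 < a_hi by split; lra.
exists (rel_energy_lower_const m rho_lo a_lo), (rel_energy_upper_const M rho_hi a_hi).
split; first exact: rel_energy_lower_const_gt0.
split; first exact: rel_energy_upper_const_gt0 (ltW hi_gt0) a_hi_gt0.
move=> wbar epsbar gbar zbar l g a z wbar_gt0 epsbar_gt0 _ _ _ hess m_a m_z a_in gz_le
  eps eps_in rho w rhoh wh m_rho m_w m_rhoh m_wh ranges.
have hess_gt0 : 0 < 4 * epsbar ^+ 2 * wbar ^+ 2 by rewrite !mulr_gt0 ?exprn_gt0.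
have P2_in := P2_bounds _ hess_gt0 hess.
have cross (x u : R) : rho_lo <= x <= rho_hi -> - wbar <= u <= wbar ->
    4 * (eps * u) ^+ 2 <= x * derive1n 2 P x.
  move=> /hess hess_x u_in; apply: le_trans hess_x.
  by rewrite -mulrA ler_pM2l // sqr_mul_le.
have gz_bm : bounded_measurable (dom l) (fun x => g * z x).
  by split; [exact: measurable_funM | exists (gbar * zbar)].
apply: (rel_energy_bounds_ae (P := P) lo_hi (ltW wbar_gt0)
          (smooth_pos_continuous (n := 0) smooth lo_gt0)
          (smooth_pos_continuous (n := 1) smooth lo_gt0)
          (bounded_measurable_itv m_a a_in) gz_bm m_rho m_w m_rhoh m_wh ranges).
move=> x r v rh vh Dx [r_in rh_in v_in vh_in].
have [P_P1 P1_P2] := smooth_pos_derive12 smooth.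
exact: (rel_density_weighted_bounds P_P1 P1_P2 lo_gt0 m_gt0 P2_in cross r_in rh_in v_in vh_in
          a_lo_gt0 (a_in x Dx)).
Qed.
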